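(* (a) Let $x\in P$ and $(y,v')\in\mathcal{P}$ with $x\neq y$ and $v'\in x'^{\perp}$ in $S'$. Then $|\{x,(y,v')\}^{\perp}|\geq 3$ in $\mathbb{S}$. (b) Let $u'\in P'$ and $(y,v')\in\mathcal{P}$ with $u'\neq v'$ and $y\in u^{\perp}$ in $S$. Then $|\{u',(y,v')\}^{\perp}|\geq 3$ in $\mathbb{S}$.
   Context: Let $S=(P,L)$ and $S'=(P',L')$ be generalized quadrangles of order $(2,2)$ (every line has 3 points, every point lies on 3 lines, and for each point $x$ and line $l\not\ni x$ exactly one point of $l$ is collinear with $x$), with an isomorphism $x\mapsto x'$ from $S$ to $S'$ (write $u$ for the preimage of $u'\in P'$). In a point-line geometry, $x^{\perp}$ is $x$ together with all points collinear with $x$, and $A^{\perp}=\bigcap_{a\in A}a^{\perp}$. A triad is a set of three pairwise non-collinear points, complete if $|T^{\perp}|=3$. Let $\mathcal{P}=\{(x,y')\in P\times P':y'\in x'^{\perp}\}$ and $\mathcal{L}$ the set of all $3$-subsets $\{(x,u'),(y,v'),(z,w')\}$ of $\mathcal{P}$ where $T=\{x,y,z\}$ (three distinct points) is a line or complete triad of $S$ and $\{u',v',w'\}=T'^{\perp}$ in $S'$ with $u',v',w'$ distinct. The geometry $\mathbb{S}=(\mathbb{P},\mathbb{L})$ has point set $\mathbb{P}=\mathcal{P}\cup P\cup P'$ (disjoint union) and line set $\mathcal{L}\cup\{\{x,(x,u'),u'\}:(x,u')\in\mathcal{P}\}$. *)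

From mathcomp Require Import all_boot.
Set Implicit Arguments. Unset Strict Implicit. Unset Printing Implicit Defensive.

Section Geometry.
Variable T : finType.
Variable Ln : {set {set T}}.

Definition collinear (a b : T) : bool := [exists l in Ln, (a \in l) && (b \in l)].

Definition perp (a : T) : {set T} := [set b | (b == a) || collinear a b].

Definition setperp (A : {set T}) : {set T} := \bigcap_(a in A) perp a.

Definition GQ22 : Prop :=
  [/\ forall l, l \in Ln -> #|l| = 3,
      forall x, #|[set l in Ln | x \in l]| = 3 &
      forall x l, l \in Ln -> x \notin l -> #|[set y in l | collinear x y]| = 1].

Definition triad (A : {set T}) : bool :=
  (#|A| == 3) && [forall a in A, forall b in A, (a != b) ==> ~~ collinear a b].

Definition complete_triad (A : {set T}) : bool := triad A && (#|setperp A| == 3).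
End Geometry.

Section BigS.
Variables (P P' : finType) (L : {set {set P}}) (L' : {set {set P'}}) (f : P -> P').

Definition Pcal : {set P * P'} := [set p | p.2 \in perp L' (f p.1)].

Definition Lcal_set (X : {set P * P'}) : bool :=
  [&& X \subset Pcal, #|X| == 3,
      #|[set p.1 | p in X]| == 3,
      ([set p.1 | p in X] \in L) || complete_triad L [set p.1 | p in X],
      #|[set p.2 | p in X]| == 3 &
      [set p.2 | p in X] == setperp L' [set f p.1 | p in X]].

Definition BQ := ((P * P') + (P + P'))%type.
Definition ptPair (p : P * P') : BQ := inl p.
Definition ptP (x : P) : BQ := inr (inl x).
Definition ptP' (u : P') : BQ := inr (inr u).

Definition bigPoints : {set BQ} :=
  [set ptPair p | p in Pcal] :|: [set ptP x | x : P] :|: [set ptP' u | u : P'].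

Definition bigLines : {set {set BQ}} :=
  [set [set ptPair p | p in X] | X : {set P * P'} & Lcal_set X]
  :|: [set [set ptP p.1; ptPair p; ptP' p.2] | p in Pcal].
End BigS.

From mathcomp Require Import all_boot.
Set Implicit Arguments. Unset Strict Implicit. Unset Printing Implicit Defensive.

(* Every point of a generalized quadrangle of order (2,2) is regular: for p <> q,
   D = {p,q}^perp and B = D^perp both have three points, each is a line or a
   complete triad, and B^perp = D.  Any matching of such a block B of S' with
   its perp D gives a line {(b_i, d_i)} of the big geometry (first coordinates
   pulled back to S).
   (a) v' lies in D = {x',y'}^perp; matching y' with v' and x' with one of the
   two other points a' of D shows that (x, a') is collinear with (y, v'), so
   (x, a1'), (x, a2') and v' lie in {x, (y, v')}^perp.
   (b) The roles of the two blocks are exchanged: y' lies in D = {u',v'}^perp,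
   u', v' lie in D^perp, and (a, u') for a' in D minus y', together with y, lie
   in {u', (y, v')}^perp. *)

Definition line_or_complete_triad (T : finType) (Ln : {set {set T}}) (A : {set T}) :=
  (A \in Ln) || complete_triad Ln A.

Section ThreeSets.
Variable T : finType.
Implicit Types (A : {set T}) (a b c d : T).

Lemma cards3 a b c : a != b -> a != c -> b != c -> #|[set a; b; c]| = 3.
Proof. by move=> ab ac bc; rewrite -setUA !cardsU1 cards1 !inE negb_or ab ac bc. Qed.

Lemma cards4 a b c d : a != b -> a != c -> a != d -> b != c -> b != d -> c != d ->
  #|[set a; b; c; d]| = 4.
Proof.
move=> ab ac ad bc bd cd.
by rewrite -!setUA !cardsU1 cards1 !inE !negb_or ab ac ad bc bd cd.
Qed.

Lemma cards3_extend A a b : a \in A -> b \in A -> a != b -> #|A| = 3 ->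
  exists c, [/\ a != c, b != c & A = [set a; b; c]].
Proof.
move=> aA bA ab cardA; have bAa : b \in A :\ a by rewrite !inE eq_sym ab.
have /cards1P[c Ec] : #|A :\ a :\ b| == 1.
  by move: cardA; rewrite (cardsD1 a) aA (cardsD1 b) bAa !add1n => -[->].
have : c \in A :\ a :\ b by rewrite Ec set11.
rewrite !inE => /and3P[cb ca _]; exists c; split; rewrite 1?eq_sym //.
by rewrite -(setD1K aA) -(setD1K bAa) Ec setUA.
Qed.

Lemma cards3D1 A a : a \in A -> #|A| = 3 -> #|A :\ a| = 2.
Proof. by move=> aA; rewrite (cardsD1 a) aA => -[]. Qed.

Lemma cards3E A : #|A| = 3 ->
  exists a b c, [/\ a != b, a != c, b != c & A = [set a; b; c]].
Proof.
move=> cardA; have /card_gt1P[a [b [aA bA ab]]] : 1 < #|A| by rewrite cardA.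
by have [c [ac bc ->]] := cards3_extend aA bA ab cardA; exists a, b, c.
Qed.

End ThreeSets.

Lemma imset_set3 (T1 T2 : finType) (h : T1 -> T2) a b c :
  h @: [set a; b; c] = [set h a; h b; h c].
Proof. by rewrite !imsetU !imset_set1. Qed.

Section Geometry.
Variables (T : finType) (Ln : {set {set T}}).
Local Notation col := (collinear Ln).

Lemma collinearP a b : reflect (exists2 l, l \in Ln & (a \in l) && (b \in l)) (col a b).
Proof.
by apply: (iffP existsP) => [[l /andP[Hl ab]]|[l Hl ab]]; exists l; rewrite ?Hl.
Qed.

Lemma collinear_line l a b : l \in Ln -> a \in l -> b \in l -> col a b.
Proof. by move=> Hl al bl; apply/collinearP; exists l; rewrite ?al ?bl. Qed.

Lemma collinear_sym a b : col a b = col b a.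
Proof.
by apply/collinearP/collinearP => -[l Hl /andP[al bl]]; exists l; rewrite ?al ?bl.
Qed.

Lemma collinear_mem_perp a b : col a b -> b \in perp Ln a.
Proof. by rewrite inE => ->; rewrite orbT. Qed.

Lemma perp_line l a b : l \in Ln -> a \in l -> b \in l -> b \in perp Ln a.
Proof. by move=> Hl al bl; apply/collinear_mem_perp/(collinear_line Hl al bl). Qed.

Lemma perp_sym a b : (b \in perp Ln a) = (a \in perp Ln b).
Proof. by rewrite !inE eq_sym collinear_sym. Qed.

Lemma setperp2E a b : setperp Ln [set a; b] = perp Ln a :&: perp Ln b.
Proof. by rewrite /setperp bigcap_setU !big_set1. Qed.

Lemma setperpS (A B : {set T}) : A \subset B -> setperp Ln B \subset setperp Ln A.
Proof. by move=> sAB; apply/bigcapsP => a aA; apply: bigcap_inf (subsetP sAB a aA). Qed.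

Lemma subset_biperp (A : {set T}) : A \subset setperp Ln (setperp Ln A).
Proof. by apply/subsetP => a aA; apply/bigcapP => w /bigcapP wA; rewrite perp_sym wA. Qed.

Lemma setperp_biperp (A : {set T}) : setperp Ln (setperp Ln (setperp Ln A)) = setperp Ln A.
Proof. by apply/eqP; rewrite eqEsubset setperpS ?subset_biperp. Qed.

End Geometry.

Section GQ22.
Variables (T : finType) (Ln : {set {set T}}).
Hypothesis gq : GQ22 Ln.
Local Notation col := (collinear Ln).
Local Notation lct := (line_or_complete_triad Ln).

Lemma card_line l : l \in Ln -> #|l| = 3.
Proof. by case: gq => + _ _; apply. Qed.

Lemma collinear_refl a : col a a.
Proof.
case: gq => _ lines_a _.
have /card_gt0P[l] : 0 < #|[set l in Ln | a \in l]| by rewrite lines_a.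
by rewrite inE => /andP[Hl al]; exact: (collinear_line Hl al al).
Qed.

Lemma noncollinear_neq a b : ~~ col a b -> a != b.
Proof. by apply: contraNneq => ->; apply: collinear_refl. Qed.

Lemma mem_perp a b : (b \in perp Ln a) = col a b.
Proof. by rewrite inE; case: eqP => // ->; rewrite collinear_refl. Qed.

Lemma mem_setperp2 a b w : (w \in setperp Ln [set a; b]) = col a w && col b w.
Proof. by rewrite setperp2E inE !mem_perp. Qed.

Lemma setperpP (A : {set T}) w : reflect (forall a, a \in A -> col a w) (w \in setperp Ln A).
Proof. by apply: (iffP bigcapP) => Hw a /Hw; rewrite mem_perp. Qed.

Lemma proj_exists l x : l \in Ln -> x \notin l -> exists2 a, a \in l & col x a.
Proof.
case: gq => _ _ proj Hl xl.
have /cards1P[a Ea] : #|[set y in l | col x y]| == 1 by rewrite proj.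
have : a \in [set y in l | col x y] by rewrite Ea set11.
by rewrite inE => /andP[]; exists a.
Qed.

Lemma proj_uniq l x a b : l \in Ln -> x \notin l -> a \in l -> b \in l ->
  col x a -> col x b -> a = b.
Proof.
case: gq => _ _ proj Hl xl al bl xa xb.
have /cards1P[c Ec] : #|[set y in l | col x y]| == 1 by rewrite proj.
have mem_c y : y \in l -> col x y -> y = c by move=> yl xy; apply/set1P; rewrite -Ec inE yl.
by rewrite (mem_c a) // (mem_c b).
Qed.

Lemma mem_line_of_collinear2 l x a b : l \in Ln -> a != b -> a \in l -> b \in l ->
  col x a -> col x b -> x \in l.
Proof.
move=> Hl ab al bl xa xb; apply: contraT => xl.
by move: ab; rewrite (proj_uniq Hl xl al bl xa xb) eqxx.
Qed.

Lemma line_uniq l m a b : l \in Ln -> m \in Ln -> a != b ->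
  a \in l -> b \in l -> a \in m -> b \in m -> l = m.
Proof.
move=> Hl Hm ab al bl am bm; apply/eqP; rewrite eqEcard !card_line // leqnn andbT.
apply/subsetP => w wl; apply: (mem_line_of_collinear2 Hm ab am bm);
  by rewrite collinear_sym; apply: collinear_line Hl _ wl.
Qed.

Lemma setperp2_line l a b : l \in Ln -> a != b -> a \in l -> b \in l ->
  setperp Ln [set a; b] = l.
Proof.
move=> Hl ab al bl; apply/setP => w; rewrite mem_setperp2.
apply/andP/idP => [[aw bw]|wl]; last by split; apply: collinear_line Hl _ wl.
by apply: (mem_line_of_collinear2 Hl ab al bl); rewrite collinear_sym.
Qed.

Lemma setperp_line l : l \in Ln -> setperp Ln l = l.
Proof.
move=> Hl; have /card_gt1P[a [b [al bl ab]]] : 1 < #|l| by rewrite card_line.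
apply/eqP; rewrite eqEsubset; apply/andP; split.
  rewrite -{2}(setperp2_line Hl ab al bl); apply: setperpS.
  by apply/subsetP => w /set2P[]->.
by apply/subsetP => w wl; apply/setperpP => c cl; apply: collinear_line Hl cl wl.
Qed.

Lemma setperp2_noncollinear p q a b : ~~ col p q ->
  a \in setperp Ln [set p; q] -> b \in setperp Ln [set p; q] -> a != b -> ~~ col a b.
Proof.
rewrite !mem_setperp2 => npq /andP[pa qa] /andP[pb qb] ab.
apply: contra npq => /collinearP[l Hl /andP[al bl]].
by apply: (collinear_line Hl); apply: (mem_line_of_collinear2 Hl ab al bl).
Qed.

Lemma noncollinear_on_line l r a s p : l \in Ln -> r \in l -> a \in l -> s \in l ->
  a != s -> col p a -> ~~ col p r -> ~~ col p s.
Proof.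
move=> Hl rl al sl a_s pa; apply: contra => ps.
exact: collinear_line Hl (mem_line_of_collinear2 Hl a_s al sl pa ps) rl.
Qed.

Lemma card_noncollinear_neighbours c (W : {set T}) : {in W, forall w, col c w} ->
  {in W &, forall a b, a != b -> ~~ col a b} -> #|W| <= 3.
Proof.
move=> cW ncW; case: gq => _ lines_c _.
pose line_to (w : T) : {set T} := odflt set0 [pick l in Ln | (c \in l) && (w \in l)].
have line_toP w : w \in W -> [&& line_to w \in Ln, c \in line_to w & w \in line_to w].
  move=> wW; rewrite /line_to; case: pickP => [l /andP[-> ->] //|none].
  by have /collinearP[l Hl clw] := cW w wW; move: (none l); rewrite Hl clw.
have sub : line_to @: W \subset [set l in Ln | c \in l].
  by apply/subsetP => _ /imsetP[w /line_toP/and3P[Hl cl _] ->]; rewrite inE Hl.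
have inj : {in W &, injective line_to}.
  move=> a b aW bW eq_ab; apply: contraTeq (ncW a b aW bW) _.
  have /and3P[_ _ al] := line_toP a aW; have /and3P[Hl _ bl] := line_toP b bW.
  by apply: collinear_line Hl _ bl; rewrite -eq_ab.
by rewrite -(card_in_imset inj) -(lines_c c) subset_leq_card.
Qed.

Lemma card_setperp2 p q : ~~ col p q -> #|setperp Ln [set p; q]| = 3.
Proof.
move=> npq; apply/eqP; rewrite eqn_leq; apply/andP; split.
  apply: (@card_noncollinear_neighbours p) => [w|a b aD bD].
    by rewrite mem_setperp2 => /andP[].
  exact: setperp2_noncollinear npq aD bD.
case: gq => _ lines_p _.
pose proj (l : {set T}) := odflt p [pick w in l | col q w].
have projP l : l \in Ln -> p \in l -> (proj l \in l) && col q (proj l).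
  move=> Hl pl; have ql : q \notin l by apply: contra npq; apply: collinear_line Hl pl.
  have [a al qa] := proj_exists Hl ql.
  by rewrite /proj; case: pickP => [w /andP[-> ->] //|/(_ a)]; rewrite al qa.
have sub : proj @: [set l in Ln | p \in l] \subset setperp Ln [set p; q].
  apply/subsetP => w /imsetP[l]; rewrite inE => /andP[Hl pl] ->.
  have /andP[wl qw] := projP l Hl pl.
  by rewrite mem_setperp2 qw (collinear_line Hl pl wl).
have inj : {in [set l in Ln | p \in l] &, injective proj}.
  move=> l m; rewrite !inE => /andP[Hl pl] /andP[Hm pm] eq_lm.
  have /andP[wl qw] := projP l Hl pl; have /andP[wm _] := projP m Hm pm.
  have pw : p != proj l by apply: contraNneq npq => ->; rewrite collinear_sym.
  by apply: line_uniq Hl Hm pw pl wl pm _; rewrite eq_lm.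
by rewrite -(lines_p p) -(card_in_imset inj) subset_leq_card.
Qed.

Lemma collinear_third_center p q r a b c :
  ~~ col p q -> ~~ col p r -> ~~ col q r -> ~~ col a b -> ~~ col a c -> ~~ col b c ->
  {subset [set a; b; c] <= setperp Ln [set p; q]} -> r \in setperp Ln [set a; b] ->
  col r c.
Proof.
move=> npq npr nqr nab nac nbc abc_pq; rewrite mem_setperp2 => /andP[ar br].
have /andP[pa qa] : col p a && col q a by rewrite -mem_setperp2 abc_pq // !inE eqxx.
have /andP[pb qb] : col p b && col q b by rewrite -mem_setperp2 abc_pq // !inE eqxx orbT.
have /andP[pc qc] : col p c && col q c by rewrite -mem_setperp2 abc_pq // !inE eqxx orbT.
(* Otherwise c would lie on four lines: those through p, q and through its
   projections s, s' onto the lines ra and rb. *)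
apply: contraT => nrc.
have /collinearP[la Hla /andP[ala rla]] := ar.
have /collinearP[lb Hlb /andP[blb rlb]] := br.
have [s sla cs] := proj_exists Hla (contra (collinear_line Hla ala) nac).
have [s' s'lb cs'] := proj_exists Hlb (contra (collinear_line Hlb blb) nbc).
have a_s : a != s by apply: contraNneq nac => ->; rewrite collinear_sym.
have b_s' : b != s' by apply: contraNneq nbc => ->; rewrite collinear_sym.
have nss' : ~~ col s s'.
  apply: contra nab => ss'.
  have rs : r != s by apply: contraNneq nrc => ->; rewrite collinear_sym.
  have rs' : r != s' by apply: contraNneq nrc => ->; rewrite collinear_sym.
  have s'la : s' \in la.
    apply: (mem_line_of_collinear2 Hla rs rla sla); last by rewrite collinear_sym.
    exact: (collinear_line Hlb s'lb rlb).
  rewrite (line_uniq Hla Hlb rs' rla s'la rlb s'lb) in ala.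
  exact: collinear_line Hlb ala blb.
have nps := noncollinear_on_line Hla rla ala sla a_s pa npr.
have nqs := noncollinear_on_line Hla rla ala sla a_s qa nqr.
have nps' := noncollinear_on_line Hlb rlb blb s'lb b_s' pb npr.
have nqs' := noncollinear_on_line Hlb rlb blb s'lb b_s' qb nqr.
have four : #|[set p; q; s; s']| = 4 by rewrite cards4 ?noncollinear_neq.
suff : #|[set p; q; s; s']| <= 3 by rewrite four.
apply: (@card_noncollinear_neighbours c) => [w|x y].
  by rewrite !inE -!orbA => /or4P[]/eqP->; rewrite // collinear_sym.
rewrite !inE -!orbA => /or4P[]/eqP-> /or4P[]/eqP->; rewrite ?eqxx // => _;
  by rewrite // collinear_sym.
Qed.

Lemma biperp2_noncollinear p q : ~~ col p q -> exists r,
  [/\ ~~ col p r, ~~ col q r & setperp Ln (setperp Ln [set p; q]) = [set p; q; r]].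
Proof.
move=> npq; have [a [b [c [ab ac bc eD]]]] := cards3E (card_setperp2 npq).
have nD x y : x \in [set a; b; c] -> y \in [set a; b; c] -> x != y -> ~~ col x y.
  by rewrite -eD; apply: setperp2_noncollinear.
have nab : ~~ col a b by apply: nD ab; rewrite !inE eqxx ?orbT.
have nac : ~~ col a c by apply: nD ac; rewrite !inE eqxx ?orbT.
have nbc : ~~ col b c by apply: nD bc; rewrite !inE eqxx ?orbT.
have abD : [set a; b] \subset setperp Ln [set p; q].
  by rewrite eD; apply/subsetP => w /set2P[]->; rewrite !inE eqxx ?orbT.
have pq_ab : [set p; q] \subset setperp Ln [set a; b].
  exact: subset_trans (subset_biperp _ _) (setperpS _ abD).
have pab : p \in setperp Ln [set a; b] by apply: (subsetP pq_ab); rewrite !inE eqxx.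
have qab : q \in setperp Ln [set a; b] by apply: (subsetP pq_ab); rewrite !inE eqxx orbT.
have [r [pr qr eab]] := cards3_extend pab qab (noncollinear_neq npq) (card_setperp2 nab).
have rab : r \in setperp Ln [set a; b] by rewrite eab !inE eqxx ?orbT.
have npr := setperp2_noncollinear nab pab rab pr.
have nqr := setperp2_noncollinear nab qab rab qr.
have abc_pq : {subset [set a; b; c] <= setperp Ln [set p; q]} by rewrite eD.
have rc := collinear_third_center npq npr nqr nab nac nbc abc_pq rab.
exists r; split => //; apply/eqP; rewrite eqEsubset; apply/andP; split.
  by rewrite -eab setperpS.
apply/subsetP => w; rewrite !inE -!orbA => /or3P[]/eqP->.
- by apply: (subsetP (subset_biperp _ _)); rewrite !inE eqxx.
- by apply: (subsetP (subset_biperp _ _)); rewrite !inE eqxx orbT.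
have /andP[ar br] : col a r && col b r by rewrite -mem_setperp2.
apply/setperpP => x; rewrite eD !inE -!orbA => /or3P[]/eqP-> //.
by rewrite collinear_sym.
Qed.

Lemma pairwise_noncollinear_triad (A : {set T}) : #|A| = 3 ->
  {in A &, forall a b, a != b -> ~~ col a b} -> triad Ln A.
Proof.
move=> cA nA; rewrite /triad cA eqxx; apply/forall_inP => a aA.
by apply/forall_inP => b bA; apply/implyP; apply: nA.
Qed.

Lemma line_or_complete_triad_of_triad (A : {set T}) :
  triad Ln A -> #|setperp Ln A| = 3 -> lct A.
Proof. by move=> tA cA; rewrite /line_or_complete_triad /complete_triad tA cA eqxx orbT. Qed.

Lemma line_or_complete_triad_setperp2 p q : p != q ->
  lct (setperp Ln [set p; q]) /\ lct (setperp Ln (setperp Ln [set p; q])).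
Proof.
move=> pq; have [/collinearP[l Hl /andP[pl ql]]|npq] := boolP (col p q).
  by rewrite (setperp2_line Hl pq pl ql) setperp_line // /line_or_complete_triad Hl.
have cD := card_setperp2 npq; have [r [npr nqr eB]] := biperp2_noncollinear npq.
have tB : triad Ln [set p; q; r].
  apply: pairwise_noncollinear_triad => [|x y]; first by rewrite cards3 ?noncollinear_neq.
  rewrite !inE -!orbA => /or3P[]/eqP-> /or3P[]/eqP->; rewrite ?eqxx // => _;
    by rewrite collinear_sym.
split; apply: line_or_complete_triad_of_triad;
  rewrite ?setperp_biperp ?eB ?cards3 ?noncollinear_neq //.
by apply: pairwise_noncollinear_triad => // a b aD bD; apply: setperp2_noncollinear npq aD bD.
Qed.

Lemma card_line_or_complete_triad B : lct B -> #|B| = 3 /\ #|setperp Ln B| = 3.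
Proof.
case/orP => [Hl|/andP[/andP[/eqP cB _] /eqP cBp]] //.
by rewrite setperp_line // card_line.
Qed.

End GQ22.

Section BigGeometry.
Variables (P P' : finType) (L : {set {set P}}) (L' : {set {set P'}}).
Variables (f : P -> P') (g : P' -> P).
Hypotheses (fK : cancel f g) (gK : cancel g f).
Hypothesis f_lines : forall l : {set P}, (f @: l \in L') = (l \in L).
Local Notation bigL := (bigLines L L' f).

Let f_inj : injective f := can_inj fK.

Lemma collinear_f a b : collinear L' (f a) (f b) = collinear L a b.
Proof.
apply/collinearP/collinearP => [[l' Hl' /andP[al' bl']]|[l Hl /andP[al bl]]].
  have fgl' : f @: (g @: l') = l' by rewrite -imset_comp (eq_imset _ gK) imset_id.
  exists (g @: l'); first by rewrite -f_lines fgl'.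
  by rewrite -(fK a) -(fK b) !imset_f.
by exists (f @: l); rewrite ?f_lines // !imset_f.
Qed.

Lemma mem_perp_f a b : (f b \in perp L' (f a)) = (b \in perp L a).
Proof. by rewrite !inE (inj_eq f_inj) collinear_f. Qed.

Lemma setperp_imset (A : {set P}) : setperp L' (f @: A) = f @: setperp L A.
Proof.
apply/setP => w; rewrite -(gK w) (mem_imset _ _ f_inj).
apply/bigcapP/bigcapP => Hw a aA; last by case/imsetP: aA => a' a'A ->; rewrite mem_perp_f Hw.
by rewrite -mem_perp_f Hw // imset_f.
Qed.

Lemma line_or_complete_triad_imset (A : {set P}) :
  line_or_complete_triad L' (f @: A) -> line_or_complete_triad L A.
Proof.
rewrite /line_or_complete_triad /complete_triad /triad f_lines setperp_imset.
rewrite !(card_imset _ f_inj).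
case/orP => [-> //|/andP[/andP[cA tA] cAp]]; rewrite cA cAp andbT /=.
apply/orP; right.
apply/forall_inP => a aA; apply/forall_inP => b bA; apply/implyP => ab.
move/forall_inP/(_ _ (imset_f f aA))/forall_inP/(_ _ (imset_f f bA)): tA.
by rewrite (inj_eq f_inj) ab collinear_f.
Qed.

Lemma mem_Pcal x u : ((x, u) \in Pcal L' f) = (u \in perp L' (f x)).
Proof. by rewrite inE. Qed.

Lemma incidence_perp x u : (x, u) \in Pcal L' f ->
  [/\ ptPair (x, u) \in perp bigL (ptP P' x), ptP' P u \in perp bigL (ptP P' x)
    & ptP' P u \in perp bigL (ptPair (x, u))].
Proof.
move=> xu; have l_xu : [set ptP P' x; ptPair (x, u); ptP' P u] \in bigL.
  by rewrite inE; apply/orP; right; apply/imsetP; exists (x, u).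
by split; apply: perp_line l_xu _ _; rewrite !inE eqxx ?orbT.
Qed.

Hypothesis gq' : GQ22 L'.

Lemma collinear_ptPair_block (B : {set P'}) b b1 u u1 :
  line_or_complete_triad L' B -> b \in B -> b1 \in B -> b1 != b ->
  u \in setperp L' B -> u1 \in setperp L' B -> u1 != u ->
  collinear bigL (ptPair (g b1, u1)) (ptPair (g b, u)).
Proof.
move=> lctB bB b1B b1b uB u1B u1u.
have [cB cBp] := card_line_or_complete_triad gq' lctB.
have [b3 [b13 bb3 eB]] := cards3_extend b1B bB b1b cB.
have [u3 [u13 uu3 eBp]] := cards3_extend u1B uB u1u cBp.
pose X := [set (g b1, u1); (g b, u); (g b3, u3)].
have X_Lcal : Lcal_set L L' f X.
  have gB : [set g b1; g b; g b3] = g @: B by rewrite eB imset_set3.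
  have fgB : f @: (g @: B) = B by rewrite -imset_comp (eq_imset _ gK) imset_id.
  rewrite /Lcal_set /X !imset_set3 /= !gK -eB -eBp gB cBp (card_imset _ (can_inj gK)) cB.
  have -> : (g @: B \in L) || complete_triad L (g @: B).
    by apply: line_or_complete_triad_imset; rewrite fgB.
  rewrite cards3 ?xpair_eqE ?negb_and ?u13 ?uu3 ?u1u ?orbT //.
  have perpB w c : w \in setperp L' B -> c \in B -> w \in perp L' c by move/bigcapP; apply.
  have b3B : b3 \in B by rewrite eB !inE eqxx orbT.
  have u3B : u3 \in setperp L' B by rewrite eBp !inE eqxx orbT.
  rewrite !eqxx /= andbT; apply/subsetP => x /setUP[/setUP[]|] /set1P->;
    by rewrite inE /= gK perpB.
apply: (@collinear_line _ _ [set ptPair p | p in X]).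
- by rewrite !inE; apply/orP; left; apply/imsetP; exists X; rewrite ?inE.
- by apply: imset_f; rewrite !inE eqxx.
- by apply: imset_f; rewrite !inE eqxx orbT.
Qed.

Lemma card_setperp_ptP_ptPair x y v : (x, v) \in Pcal L' f -> (y, v) \in Pcal L' f ->
  x != y -> 3 <= #|setperp bigL [set ptP P' x; ptPair (y, v)]|.
Proof.
move=> xv yv xy; have fxy : f x != f y by rewrite (inj_eq f_inj).
have [lctD lctB] := line_or_complete_triad_setperp2 gq' fxy.
set D := setperp L' [set f x; f y] in lctD lctB *.
have vD : v \in D by rewrite /D setperp2E inE -!mem_Pcal xv yv.
have /card_gt1P[a1 [a2 [a1D a2D a12]]] : 1 < #|D :\ v|.
  by rewrite cards3D1 //; case: (card_line_or_complete_triad gq' lctD).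
have xB : f x \in setperp L' D by apply: (subsetP (subset_biperp _ _)); rewrite !inE eqxx.
have yB : f y \in setperp L' D.
  by apply: (subsetP (subset_biperp _ _)); rewrite !inE eqxx orbT.
have xa_perp a : a \in D :\ v -> ptPair (x, a) \in setperp bigL [set ptP P' x; ptPair (y, v)].
  rewrite !inE => /andP[av aD]; rewrite setperp2E inE.
  have xa : (x, a) \in Pcal L' f by move: aD; rewrite /D setperp2E inE mem_Pcal => /andP[].
  have := @collinear_ptPair_block _ (f y) (f x) v a lctB yB xB fxy.
  rewrite setperp_biperp !fK => /(_ vD aD av) /collinear_mem_perp.
  by case: (incidence_perp xa) => -> _ _; rewrite perp_sym.
apply/card_gt2P; exists (ptPair (x, a1)), (ptPair (x, a2)), (ptP' P v).
rewrite !xa_perp // setperp2E inE; split; split => //.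
- by case: (incidence_perp xv) => _ -> _; case: (incidence_perp yv) => _ _ ->.
- by rewrite /ptPair; apply: contraNneq a12 => -[->].
Qed.

Lemma card_setperp_ptP'_ptPair y u v : (y, u) \in Pcal L' f -> (y, v) \in Pcal L' f ->
  u != v -> 3 <= #|setperp bigL [set ptP' P u; ptPair (y, v)]|.
Proof.
move=> yu yv uv; have [lctD lctB] := line_or_complete_triad_setperp2 gq' uv.
set D := setperp L' [set u; v] in lctD lctB *.
have yD : f y \in D by rewrite /D setperp2E inE !(perp_sym _ _ (f y)) -!mem_Pcal yu yv.
have /card_gt1P[a1 [a2 [a1D a2D a12]]] : 1 < #|D :\ f y|.
  by rewrite cards3D1 //; case: (card_line_or_complete_triad gq' lctD).
have uB : u \in setperp L' D by apply: (subsetP (subset_biperp _ _)); rewrite !inE eqxx.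
have vB : v \in setperp L' D by apply: (subsetP (subset_biperp _ _)); rewrite !inE eqxx orbT.
have au_perp a : a \in D :\ f y ->
    ptPair (g a, u) \in setperp bigL [set ptP' P u; ptPair (y, v)].
  rewrite !inE => /andP[ay aD]; rewrite setperp2E inE.
  have au : (g a, u) \in Pcal L' f.
    by move: aD; rewrite /D setperp2E inE mem_Pcal gK perp_sym => /andP[].
  have := @collinear_ptPair_block _ (f y) a v u lctD yD aD ay vB uB uv.
  rewrite fK => /collinear_mem_perp; rewrite perp_sym => ->.
  by case: (incidence_perp au) => _ _; rewrite andbT perp_sym.
apply/card_gt2P; exists (ptPair (g a1, u)), (ptPair (g a2, u)), (ptP P' y).
rewrite !au_perp // setperp2E inE; split; split => //.
- rewrite perp_sym (perp_sym _ (ptPair _)).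
  by case: (incidence_perp yu) => _ ->; case: (incidence_perp yv) => ->.
- by rewrite /ptPair; apply: contraNneq a12 => -[/(can_inj gK)->].
Qed.

End BigGeometry.

Theorem lemma4p3 (P P' : finType) (L : {set {set P}}) (L' : {set {set P'}})
    (f : P -> P')
    (HS : GQ22 L) (HS' : GQ22 L')
    (Hbij : bijective f)
    (Hiso : forall l : {set P}, (f @: l \in L') = (l \in L)) :
  (forall (x y : P) (v' : P'),
      (y, v') \in Pcal L' f -> x != y -> v' \in perp L' (f x) ->
      3 <= #|setperp (bigLines L L' f) [set ptP P' x; ptPair (y, v')]|)
  /\
  (forall (u' v' : P') (y u : P),
      f u = u' ->
      (y, v') \in Pcal L' f -> u' != v' -> y \in perp L u ->
      3 <= #|setperp (bigLines L L' f) [set ptP' P u'; ptPair (y, v')]|).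
Proof.
have [g fK gK] := Hbij.
split=> [x y v' yv xy vx | u' v' y u <- yv uv yu].
  by apply: (card_setperp_ptP_ptPair fK gK Hiso HS') => //; rewrite mem_Pcal.
apply: (card_setperp_ptP'_ptPair fK gK Hiso HS') => //.
by rewrite mem_Pcal perp_sym (mem_perp_f fK gK Hiso).
Qed.
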